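(* In the setting below, assume that $U$ has the Tsirelson property: there is $C>0$ such that for every $n\in\mathbb N$, every normalized block sequence $(v_j)_{j=1}^n$ of $(u_i)$ with $n\le\min\mathrm{Supp}(v_1)$ is $C$-equivalent to the unit vector basis of $\ell_1^n$. Then $Y$ is asymptotic-$c_0$.
   Context: Setting: $X$ is a separable Banach space, $(x_n)$ a sequence in $S_X$ with $\{\pm x_n\}$ dense in $S_X$; $U$ is a Banach space with a normalized $1$-unconditional boundedly complete basis $(u_n)$. For finite $I,J\subseteq\mathbb N$, $I<J$ means $\max I<\min J$. $Z$ is the completion of $c_{00}$ (unit vectors $(e_i)$) under $\|a\|_Z=\max\{\|\sum_{j=1}^k\|\sum_{i\in I_j}a_ix_i\|_Xu_{\min I_j}\|_U: k\in\mathbb N,\ I_1<\dots<I_k\text{ intervals}\}$. $(e_j^* )$ are the coordinate functionals of the basis $(e_j)$ of $Z$ and $Y=\overline{\mathrm{span}}\{e_j^*\}\subseteq Z^*$. Asymptotic-$c_0$: there is $C'\ge1$ such that for every $k$: there is a closed finite-codimensional subspace $Y_1$ such that for all $y_1\in S_{Y_1}$ there is a closed finite-codimensional $Y_2$ ... such that for all $y_k\in S_{Y_k}$, $\|\sum_{i=1}^ka_iy_i\|\le C'\max_i|a_i|$ for all $(a_i)\in\mathbb R^k$. *)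

From HB Require Import structures.
From mathcomp Require Import all_boot all_order all_algebra.
From mathcomp Require Import all_classical all_reals all_analysis.
Set Implicit Arguments. Unset Strict Implicit. Unset Printing Implicit Defensive.
Import Order.TTheory GRing.Theory Num.Theory.
Import numFieldNormedType.Exports.
Local Open Scope classical_set_scope.
Local Open Scope ring_scope.

(* Indexing convention: paper index i >= 1 corresponds to Rocq index i-1 : nat. *)

Section Defs.
Variable R : realType.

Definition separable (X : normedModType R) : Prop :=
  exists d : nat -> X, forall (x : X) (eps : R), 0 < eps ->
    exists n, `|x - d n| < eps.

Definition pm_dense_in_sphere (X : normedModType R) (x : nat -> X) : Prop :=
  (forall n, `|x n| = 1) /\
  (forall (y : X), `|y| = 1 -> forall eps : R, 0 < eps ->
     exists n, `|y - x n| < eps \/ `|y + x n| < eps).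

Definition partial_sum (U : normedModType R) (u : nat -> U) (a : nat -> R)
  (N : nat) : U := \sum_(i < N) a i *: u i.

Definition schauder_basis (U : normedModType R) (u : nat -> U) : Prop :=
  (forall v : U, exists a : nat -> R, partial_sum u a @ \oo --> v) /\
  (forall (v : U) (a b : nat -> R),
     partial_sum u a @ \oo --> v -> partial_sum u b @ \oo --> v -> a = b).

Definition normalized_seq (U : normedModType R) (u : nat -> U) : Prop :=
  forall n, `|u n| = 1.

Definition one_unconditional (U : normedModType R) (u : nat -> U) : Prop :=
  forall (a eps : nat -> R) (N : nat), (forall i, eps i = 1 \/ eps i = -1) ->
    `|\sum_(i < N) (eps i * a i) *: u i| = `|\sum_(i < N) a i *: u i|.

Definition boundedly_complete (U : normedModType R) (u : nat -> U) : Prop :=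
  forall a : nat -> R, (exists M : R, forall N, `|partial_sum u a N| <= M) ->
    cvg (partial_sum u a @ \oo).

(* b j : coefficients of v_j (j < n), all supported in [0,N);
   block condition: each v_j nonzero coefficients, supp v_j < supp v_(j+1). *)
Definition block_coeffs (n N : nat) (b : nat -> nat -> R) : Prop :=
  (forall j, (j < n)%N -> exists i, (i < N)%N /\ b j i != 0) /\
  (forall j i, (N <= i)%N -> b j i = 0) /\
  (forall j1 j2 i1 i2, (j1 < j2)%N -> (j2 < n)%N ->
      b j1 i1 != 0 -> b j2 i2 != 0 -> (i1 < i2)%N).

Definition block_vec (U : normedModType R) (u : nat -> U) (N : nat)
  (b : nat -> nat -> R) (j : nat) : U := \sum_(i < N) b j i *: u i.

Definition equiv_l1 (U : normedModType R) (C : R) (n : nat) (v : nat -> U) : Prop :=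
  forall c : nat -> R,
    C^-1 * (\sum_(j < n) `|c j|) <= `|\sum_(j < n) c j *: v j| /\
    `|\sum_(j < n) c j *: v j| <= C * (\sum_(j < n) `|c j|).

(* "n <= min Supp(v_1)" with 1-based paper indices: n <= i+1 for i in supp v_1 *)
Definition tsirelson_property (U : normedModType R) (u : nat -> U) : Prop :=
  exists C : R, 0 < C /\
    forall (n N : nat) (b : nat -> nat -> R),
      block_coeffs n N b ->
      (forall j, (j < n)%N -> `|block_vec u N b j| = 1) ->
      (forall i, b 0%N i != 0 -> (n <= i.+1)%N) ->
      equiv_l1 C n (block_vec u N b).

(* An element of c00 is a : nat -> R vanishing from N on. *)
Definition supported_below (a : nat -> R) (N : nat) : Prop :=
  forall i, (N <= i)%N -> a i = 0.

(* A list of nonempty intervals [p.1, p.2) with I_1 < I_2 < ... < I_k, k >= 1 *)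
Definition interval_list (s : seq (nat * nat)) : Prop :=
  (0 < size s)%N /\ all (fun p => (p.1 < p.2)%N) s /\
  sorted (fun p q : nat * nat => (p.2 <= q.1)%N) s.

Definition Zterm (X U : normedModType R) (x : nat -> X) (u : nat -> U)
  (a : nat -> R) (s : seq (nat * nat)) : R :=
  `|\sum_(p <- s) (`|\sum_(p.1 <= i < p.2) a i *: x i|) *: u p.1|.

Definition Znorm (X U : normedModType R) (x : nat -> X) (u : nat -> U)
  (a : nat -> R) : R :=
  sup [set t | exists s, interval_list s /\ t = Zterm x u a s].

(* A functional on Z is identified with its sequence of values f i on e_i;
   pairing with a c00 vector a supported below N. *)
Definition pairing (f a : nat -> R) (N : nat) : R := \sum_(i < N) f i * a i.

(* Y = closed span of (e_j^* ) in Z^*: f is a norm-limit of finitely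
   supported functionals *)
Definition in_Y (X U : normedModType R) (x : nat -> X) (u : nat -> U)
  (f : nat -> R) : Prop :=
  forall eps : R, 0 < eps -> exists (g : nat -> R) (M : nat),
    supported_below g M /\
    forall (a : nat -> R) (N : nat), supported_below a N ->
      `|pairing (fun i => f i - g i) a N| <= eps * Znorm x u a.

Definition Ynorm (X U : normedModType R) (x : nat -> X) (u : nat -> U)
  (f : nat -> R) : R :=
  sup [set t | exists (a : nat -> R) (N : nat), supported_below a N /\
        Znorm x u a <= 1 /\ t = `|pairing f a N|].

Definition closed_fincodim_subspace (X U : normedModType R) (x : nat -> X)
  (u : nat -> U) (W : set (nat -> R)) : Prop :=
  W `<=` in_Y x u /\
  W (fun _ => 0) /\
  (forall f g, W f -> W g -> W (fun i => f i + g i)) /\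
  (forall (c : R) f, W f -> W (fun i => c * f i)) /\
  (forall f, in_Y x u f ->
     (forall eps : R, 0 < eps -> exists g, W g /\
        Ynorm x u (fun i => f i - g i) <= eps) -> W f) /\
  (exists vs : seq (nat -> R), (forall k, (k < size vs)%N -> in_Y x u (nth (fun _ => 0) vs k)) /\
     forall f, in_Y x u f -> exists c : nat -> R,
       W (fun i => f i - \sum_(k < size vs) c k * (nth (fun _ => 0) vs k) i)).

(* The asymptotic game: after k rounds the chosen vectors ys (in order)
   must satisfy the c0 upper estimate with constant C'. *)
Fixpoint asymp_c0_game (X U : normedModType R) (x : nat -> X) (u : nat -> U)
  (C' : R) (k : nat) (ys : seq (nat -> R)) : Prop :=
  match k with
  | 0%N => forall a : nat -> R,
      Ynorm x u (fun i => \sum_(m < size ys) a m * (nth (fun _ => 0) ys m) i)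
        <= C' * \big[Num.max/0]_(m < size ys) `|a m|
  | k'.+1 => exists W, closed_fincodim_subspace x u W /\
      forall y, W y -> Ynorm x u y = 1 -> asymp_c0_game x u C' k' (rcons ys y)
  end.

Definition Y_asymptotic_c0 (X U : normedModType R) (x : nat -> X) (u : nat -> U)
  : Prop :=
  exists C' : R, 1 <= C' /\ forall k : nat, asymp_c0_game x u C' k [::].

End Defs.

From HB Require Import structures.
From mathcomp Require Import all_boot all_order all_algebra.
From mathcomp Require Import all_classical all_reals all_analysis.
From mathcomp Require Import zify ring lra.
Import Order.TTheory GRing.Theory Num.Theory.
Import numFieldNormedType.Exports.
Set Implicit Arguments. Unset Strict Implicit. Unset Printing Implicit Defensive.
Local Open Scope classical_set_scope.
Local Open Scope ring_scope.

(* For z in c_00 write z|[m,m') for its restriction to an interval.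
   1. Restriction is 2-bounded on Z: an admissible interval family for
      z|[m,m') is clipped to [m,m'); intervals starting before m collapse onto
      the coordinate m, which 1-unconditionality controls.
   2. Key estimate: for a chain m_0 < ... < m_n with n <= m_0,
      sum_j ||z|[m_j,m_(j+1))||_Z <= 2C ||z||_Z.  Nearly norming families for
      the pieces, clipped to their blocks, produce disjoint blocks of (u_i);
      by the lower l_1 estimate of the Tsirelson property their norms add up
      to at most C times the norm of their sum, itself a term of ||z||_Z.
   3. The game is won by playing the tail subspaces W_m = {f in Y : f_i = 0,
      i < m}, which are closed and finite-codimensional, along a chain chosen
      so that each picked y_j is (1/(n+1))-close to a functional supported
      below m_(j+1).  Then y_j acts on z essentially as on z|[m_j,m_(j+1)),
      and step 2 gives ||sum_j a_j y_j|| <= (2C + 3) max_j |a_j|.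
   The file develops, in order: unconditional-basis estimates, the norms of
   Z and Y, the tail subspaces, restriction and clipping (step 1), families
   of successive intervals, the Tsirelson estimates (step 2) and the game
   (step 3). *)

Section UnconditionalBasis.
Variable R : realType.
Variable U : normedModType R.
Variable u : nat -> U.
Hypothesis u_normalized : normalized_seq u.
Hypothesis u_uncond : one_unconditional u.

Lemma basis_norm_le_l1 (f : nat -> R) L :
  `|\sum_(i < L) f i *: u i| <= \sum_(i < L) `|f i|.
Proof.
apply: le_trans (ler_norm_sum _ _ _) _.
by apply: ler_sum => i _; rewrite normrZ u_normalized mulr1.
Qed.

(* Shrinking one coefficient in modulus does not increase the norm: the new
   vector is a convex combination of the old one and a sign change of it. *)
Lemma uncond_shrink_coef (f : nat -> R) N k (c : R) : `|c| <= `|f k| ->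
  `|\sum_(i < N) (if (i:nat) == k then c else f i) *: u i|
    <= `|\sum_(i < N) f i *: u i|.
Proof.
move=> hc; have [fk0|fk0] := eqVneq (f k) 0.
  move: hc; rewrite fk0 normr0 normr_le0 => /eqP ->.
  rewrite le_eqVlt; apply/orP; left; apply/eqP; congr `|_|.
  by apply: eq_bigr => i _; case: eqP => // ->; rewrite fk0.
set l := c / f k.
have hl : `|l| <= 1 by rewrite normrM normrV ?unitfE // ler_pdivrMr ?normr_gt0 // mul1r.
have [l_lo l_hi] : -1 <= l /\ l <= 1 by move: hl; rewrite ler_norml => /andP[].
pose eps i : R := if i == k then -1 else 1.
have heps i : eps i = 1 \/ eps i = -1 by rewrite /eps; case: eqP; auto.
have convex_comb : \sum_(i < N) (if (i:nat) == k then c else f i) *: u i =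
   ((1 + l) / 2) *: \sum_(i < N) f i *: u i +
   ((1 - l) / 2) *: \sum_(i < N) (eps i * f i) *: u i.
  rewrite !scaler_sumr -big_split /=; apply: eq_bigr => i _.
  by rewrite !scalerA -scalerDl /eps /l; case: eqP => [->|_]; congr (_ *: _); field.
have weights : `|(1 + l) / 2| + `|(1 - l) / 2| = 1 by rewrite !ger0_norm; lra.
rewrite convex_comb (le_trans (ler_normD _ _)) // !normrZ (u_uncond _ _ heps).
by rewrite -!normrM -mulrDl weights mul1r.
Qed.

Lemma uncond_dominated N (d e : nat -> R) :
  (forall i, (i < N)%N -> `|d i| <= `|e i|) ->
  `|\sum_(i < N) d i *: u i| <= `|\sum_(i < N) e i *: u i|.
Proof.
move=> hde.
pose g k i := if (i < k)%N then d i else e i.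
have g_start : \sum_(i < N) g 0%N i *: u i = \sum_(i < N) e i *: u i.
  by apply: eq_bigr.
have g_end : \sum_(i < N) g N i *: u i = \sum_(i < N) d i *: u i.
  by apply: eq_bigr => i _; rewrite /g ltn_ord.
suff : forall k, `|\sum_(i < N) g k i *: u i| <= `|\sum_(i < N) e i *: u i|.
  by move/(_ N); rewrite g_end.
elim=> [|k IH]; first by rewrite g_start.
apply: le_trans IH; have [kN|Nk] := ltnP k N.
  have := @uncond_shrink_coef (g k) N k (d k); rewrite /g ltnn => /(_ (hde _ kN)).
  congr (`|_| <= _); apply: eq_bigr => i _.
  by rewrite ltnS; case: (ltngtP i k) => h; rewrite ?h ?eqxx ?leqnn.
rewrite le_eqVlt; apply/orP; left; apply/eqP; congr `|_|.
apply: eq_bigr => i _; have iN := ltn_ord i.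
by rewrite /g ltnS (leq_trans (ltnW iN) Nk) (leq_trans iN Nk).
Qed.

(* Each coordinate is bounded by the norm: compare with the vector e_k u_k. *)
Lemma uncond_coef_le N (e : nat -> R) k : (k < N)%N ->
  `|e k| <= `|\sum_(i < N) e i *: u i|.
Proof.
move=> kN.
have single : \sum_(i < N) (if (i:nat) == k then e k else 0) *: u i = e k *: u k.
  rewrite (bigD1 (Ordinal kN)) //= eqxx big1 ?addr0 // => i ik.
  by case: eqP => [ik'|]; [move: ik; rewrite -(inj_eq val_inj) /= ik' eqxx|rewrite scale0r].
have := @uncond_dominated N (fun i => if i == k then e k else 0) e.
rewrite single normrZ u_normalized mulr1; apply=> i _.
by case: eqP => [->|]; rewrite ?normr0.
Qed.

End UnconditionalBasis.

Section ZNorm.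
Variable R : realType.
Variables X U : normedModType R.
Variable x : nat -> X.
Variable u : nat -> U.
Hypothesis x_normalized : forall n, `|x n| = 1.
Hypothesis u_normalized : normalized_seq u.

Definition interval_norm (z : nat -> R) (p : nat * nat) : R :=
  `|\sum_(p.1 <= i < p.2) z i *: x i|.

Definition precedes (p q : nat * nat) : bool := (p.2 <= q.1)%N.

Lemma interval_norm_ge0 z p : 0 <= interval_norm z p.
Proof. exact: normr_ge0. Qed.

Lemma interval_norm_le_l1 z p : interval_norm z p <= \sum_(p.1 <= i < p.2) `|z i|.
Proof.
rewrite /interval_norm (le_trans (ler_norm_sum _ _ _)) //.
by apply: ler_sum => i _; rewrite normrZ x_normalized mulr1.
Qed.

Lemma ZtermE z s : Zterm x u z s = `|\sum_(p <- s) interval_norm z p *: u p.1|.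
Proof. by []. Qed.

Lemma Zterm_le_sum z s : Zterm x u z s <= \sum_(p <- s) interval_norm z p.
Proof.
rewrite ZtermE (le_trans (ler_norm_sum _ _ _)) //.
by apply: ler_sum => p _; rewrite normrZ u_normalized mulr1 ger0_norm ?interval_norm_ge0.
Qed.

Lemma sum_successive_intervals_le (F : nat -> R) K : (forall i, 0 <= F i) ->
  forall s a, sorted precedes s -> all (fun p => (p.1 < p.2)%N) s ->
  all (fun p => (p.2 <= K)%N) s ->
  (if s is p :: _ then (a <= p.1)%N else (a <= K)%N) ->
  \sum_(p <- s) \sum_(p.1 <= i < p.2) F i <= \sum_(a <= i < K) F i.
Proof.
move=> F0; elim=> [|p s IH] a /=.
  by move=> _ _ _ _; rewrite big_nil; apply: sumr_ge0.
move=> hs /andP[vp vs] /andP[kp ks] ap.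
have ss : sorted precedes s by case: s hs {IH vs ks} => //= q s /andP[].
have hd : is_true (if s is q :: _ then (p.2 <= q.1)%N else (p.2 <= K)%N).
  by case: s hs {IH vs ks ss} => //= q s /andP[].
rewrite big_cons; apply: le_trans (lerD (lexx _) (IH p.2 ss vs ks hd)) _.
rewrite -big_cat_nat ?(ltnW vp) //.
rewrite [leRHS](@big_cat_nat _ _ _ p.1 a K) //=; last by rewrite (leq_trans (ltnW vp)).
by rewrite lerDr; apply: sumr_ge0.
Qed.

Lemma sum_nat_supported (F : nat -> R) N K : (N <= K)%N ->
  (forall i, (N <= i)%N -> F i = 0) ->
  \sum_(0 <= i < K) F i = \sum_(i < N) F i.
Proof.
move=> NK F0; rewrite (@big_cat_nat _ _ _ N 0 K) //= big_mkord.
rewrite [X in _ + X]big_nat_cond [X in _ + X]big1 ?addr0 // => i /andP[/andP[Ni _] _].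
exact: F0.
Qed.

Lemma Zterm_le_l1 z N s : supported_below z N -> interval_list s ->
  Zterm x u z s <= \sum_(i < N) `|z i|.
Proof.
move=> zs [hs0 [vs ss]].
apply: le_trans (Zterm_le_sum _ _) _.
apply: le_trans (_ : \sum_(p <- s) \sum_(p.1 <= i < p.2) `|z i| <= _).
  by apply: ler_sum => p _; apply: interval_norm_le_l1.
pose K := maxn N (\max_(p <- s) p.2).
have hK : all (fun p => (p.2 <= K)%N) s.
  apply/allP => p ps; rewrite /K leq_max; apply/orP; right.
  exact: (leq_bigmax_seq _ ps).
apply: le_trans (@sum_successive_intervals_le (fun i => `|z i|) K
  (fun i => normr_ge0 (z i)) s 0%N ss vs hK _) _; first by case: (s) hs0.
rewrite (@sum_nat_supported (fun i => `|z i|) N K (leq_maxl _ _)) //.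
by move=> i /zs ->; rewrite normr0.
Qed.

Lemma Zterms_has_sup z N : supported_below z N ->
  has_sup [set t | exists s, interval_list s /\ t = Zterm x u z s].
Proof.
move=> zs; split; first by exists (Zterm x u z [:: (0%N, 1%N)]), [:: (0%N, 1%N)].
by exists (\sum_(i < N) `|z i|) => t [s [hs ->]]; apply: Zterm_le_l1.
Qed.

Lemma Zterm_le_Znorm z N s : supported_below z N -> interval_list s ->
  Zterm x u z s <= Znorm x u z.
Proof.
by move=> zs hs; apply: ub_le_sup; [case: (Zterms_has_sup zs)|exists s].
Qed.

Lemma Znorm_le z B : (forall s, interval_list s -> Zterm x u z s <= B) ->
  Znorm x u z <= B.
Proof.
move=> h; apply: ge_sup; first by exists (Zterm x u z [:: (0%N, 1%N)]), [:: (0%N, 1%N)].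
by move=> t [s [hs ->]]; apply: h.
Qed.

Lemma Znorm_approx z N d : supported_below z N -> 0 < d ->
  exists s, interval_list s /\ Znorm x u z - d < Zterm x u z s.
Proof.
move=> zs d0; have [t [s [hs1 ->]] ht] := sup_adherent d0 (Zterms_has_sup zs).
by exists s.
Qed.

Lemma Znorm_le_l1 z N : supported_below z N -> Znorm x u z <= \sum_(i < N) `|z i|.
Proof. by move=> zs; apply: Znorm_le => s hs; apply: Zterm_le_l1. Qed.

Lemma Znorm_ge0 z N : supported_below z N -> 0 <= Znorm x u z.
Proof.
move=> zs; apply: le_trans (@Zterm_le_Znorm z N [:: (0%N, 1%N)] zs _) => //.
exact: normr_ge0.
Qed.

Lemma coord_le_Znorm z N i : supported_below z N -> `|z i| <= Znorm x u z.
Proof.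
move=> zs; apply: le_trans (@Zterm_le_Znorm z N [:: (i, i.+1)] zs _); last first.
  by split => //=; rewrite ltnSn.
rewrite ZtermE big_cons big_nil addr0 normrZ u_normalized mulr1.
by rewrite /interval_norm /= big_nat1 normrZ x_normalized mulr1 normr_id.
Qed.

Lemma Zterm_scale a k s : 0 <= k ->
  Zterm x u (fun i => a i * k) s = k * Zterm x u a s.
Proof.
move=> k0.
have scale p : interval_norm (fun i => a i * k) p = k * interval_norm a p.
  rewrite /interval_norm -[X in X * _](ger0_norm k0) -normrZ scaler_sumr.
  by congr `|_|; apply: eq_bigr => i _; rewrite scalerA mulrC.
rewrite !ZtermE -[k in RHS](ger0_norm k0) -normrZ scaler_sumr; congr `|_|.
by apply: eq_bigr => p _; rewrite scale scalerA.
Qed.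

End ZNorm.

Section DualNorm.
Variable R : realType.
Variables X U : normedModType R.
Variable x : nat -> X.
Variable u : nat -> U.
Hypothesis x_normalized : forall n, `|x n| = 1.
Hypothesis u_normalized : normalized_seq u.

Lemma pairing_ext (f1 f2 a1 a2 : nat -> R) N :
  (forall i, f1 i * a1 i = f2 i * a2 i) -> pairing f1 a1 N = pairing f2 a2 N.
Proof. by move=> h; apply: eq_bigr => i _; apply: h. Qed.

Lemma pairing_trunc (f a : nat -> R) K N : (K <= N)%N ->
  (forall i, (K <= i)%N -> f i * a i = 0) -> pairing f a N = pairing f a K.
Proof.
move=> KN h; rewrite /pairing -(big_mkord xpredT (fun i => f i * a i)).
exact: sum_nat_supported.
Qed.

Lemma pairing_supported (f a : nat -> R) N N' : supported_below a N -> (N <= N')%N ->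
  pairing f a N' = pairing f a N.
Proof. by move=> ha NN; apply: pairing_trunc => // i /ha ->; rewrite mulr0. Qed.

Lemma pairing_lin (f g a : nat -> R) c d N :
  pairing (fun i => c * f i + d * g i) a N = c * pairing f a N + d * pairing g a N.
Proof. by rewrite /pairing !mulr_sumr -big_split /=; apply: eq_bigr => i _; ring. Qed.

Lemma pairing_le_l1 (g a : nat -> R) M N : supported_below g M ->
  supported_below a N ->
  `|pairing g a N| <= (\sum_(i < M) `|g i|) * Znorm x u a.
Proof.
move=> hg ha.
rewrite -(pairing_supported g ha (leq_maxl N M)).
rewrite (pairing_trunc (K := M)) ?leq_maxr //; last by move=> i /hg ->; rewrite mul0r.
rewrite /pairing mulr_suml (le_trans (ler_norm_sum _ _ _)) //.
apply: ler_sum => i _; rewrite normrM ler_wpM2l //.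
exact: (coord_le_Znorm x_normalized u_normalized _ ha).
Qed.

Lemma in_Y_supported g M : supported_below g M -> in_Y x u g.
Proof.
move=> hg eps eps0; exists g, M; split => // a N ha.
rewrite (_ : pairing _ a N = 0); last first.
  by rewrite /pairing big1 // => i _; rewrite subrr mul0r.
by rewrite normr0 mulr_ge0 ?(ltW eps0) // (Znorm_ge0 x_normalized u_normalized ha).
Qed.

Lemma in_Y_lin f g c d : in_Y x u f -> in_Y x u g ->
  in_Y x u (fun i => c * f i + d * g i).
Proof.
move=> hf hg eps eps0.
pose e := eps / (2 * (`|c| + `|d| + 1)).
have hpos : 0 < 2 * (`|c| + `|d| + 1) by rewrite mulr_gt0 // ltr_wpDl // addr_ge0.
have e0 : 0 < e by rewrite divr_gt0.
have cde : (`|c| + `|d|) * e <= eps.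
  rewrite /e mulrA ler_pdivrMr // mulrC ler_wpM2l ?(ltW eps0) //.
  by have := normr_ge0 c; have := normr_ge0 d; lra.
have [g1 [M1 [h1 p1]]] := hf e e0.
have [g2 [M2 [h2 p2]]] := hg e e0.
exists (fun i => c * g1 i + d * g2 i), (maxn M1 M2); split.
  by move=> i; rewrite geq_max => /andP[/h1 -> /h2 ->]; rewrite !mulr0 addr0.
move=> a N ha.
have -> : pairing (fun i => c * f i + d * g i - (c * g1 i + d * g2 i)) a N =
  c * pairing (fun i => f i - g1 i) a N + d * pairing (fun i => g i - g2 i) a N.
  by rewrite -pairing_lin; apply: pairing_ext => i; ring.
have Z0 := Znorm_ge0 x_normalized u_normalized ha.
apply: le_trans (ler_normD _ _) _; rewrite !normrM.
apply: le_trans (lerD (ler_wpM2l (normr_ge0 c) (p1 a N ha))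
                      (ler_wpM2l (normr_ge0 d) (p2 a N ha))) _.
rewrite !mulrA -mulrDl; apply: ler_wpM2r => //.
by move: cde; rewrite mulrDl /e !mulrA.
Qed.

Lemma in_Y_add f g : in_Y x u f -> in_Y x u g -> in_Y x u (fun i => f i + g i).
Proof.
by move=> hf hg; have := in_Y_lin 1 1 hf hg; congr in_Y; apply: funext => i; ring.
Qed.

Lemma in_Y_sub f g : in_Y x u f -> in_Y x u g -> in_Y x u (fun i => f i - g i).
Proof.
by move=> hf hg; have := in_Y_lin 1 (-1) hf hg; congr in_Y; apply: funext => i; ring.
Qed.

Lemma in_Y_scale c f : in_Y x u f -> in_Y x u (fun i => c * f i).
Proof.
by move=> hf; have := in_Y_lin c 0 hf hf; congr in_Y; apply: funext => i; ring.
Qed.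

Definition Ypairings (f : nat -> R) : set R :=
  [set t | exists (a : nat -> R) (N : nat), supported_below a N /\
        Znorm x u a <= 1 /\ t = `|pairing f a N|].

Lemma Znorm_zero_le1 : Znorm x u (fun _ => 0) <= 1.
Proof.
apply: le_trans (@Znorm_le_l1 _ _ _ x u x_normalized u_normalized _ 0%N _) _ => //.
by rewrite big_ord0.
Qed.

Lemma Ypairings_has_ubound f : in_Y x u f -> has_ubound (Ypairings f).
Proof.
move=> hf; have [g [M [hg p]]] := hf 1 ltr01.
exists ((\sum_(i < M) `|g i|) + 1) => t [a [N [ha [Za ->]]]].
have -> : pairing f a N = pairing g a N + pairing (fun i => f i - g i) a N.
  rewrite -[pairing g a N]mul1r -[pairing (fun i => f i - g i) a N]mul1r -pairing_lin.
  by apply: pairing_ext => i; ring.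
apply: le_trans (ler_normD _ _) _; apply: lerD.
  by apply: le_trans (pairing_le_l1 hg ha) _; rewrite ler_piMr // sumr_ge0.
by apply: le_trans (p a N ha) _; rewrite mul1r.
Qed.

Lemma Ynorm_le f B : (forall a N, supported_below a N -> Znorm x u a <= 1 ->
  `|pairing f a N| <= B) -> Ynorm x u f <= B.
Proof.
move=> h; apply: ge_sup.
  exists 0, (fun _ => 0), 0%N; split=> //; split; first exact: Znorm_zero_le1.
  by rewrite /pairing big_ord0 normr0.
by move=> t [a [N [ha [Za ->]]]]; apply: h.
Qed.

Lemma pairing_le_Ynorm_ball f a N : in_Y x u f -> supported_below a N ->
  Znorm x u a <= 1 -> `|pairing f a N| <= Ynorm x u f.
Proof.
move=> hf ha Za; apply: ub_le_sup; first exact: Ypairings_has_ubound.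
by exists a, N.
Qed.

Lemma pairing_le_Ynorm f a N : in_Y x u f -> supported_below a N ->
  `|pairing f a N| <= Ynorm x u f * Znorm x u a.
Proof.
move=> hf ha.
have Z0 := Znorm_ge0 x_normalized u_normalized ha.
have [Zz|Zp] := eqVneq (Znorm x u a) 0.
  have a0 i : a i = 0.
    by apply/eqP; rewrite -normr_le0 -Zz (coord_le_Znorm x_normalized u_normalized _ ha).
  by rewrite Zz mulr0 /pairing big1 ?normr0 // => i _; rewrite a0 mulr0.
have Zpos : 0 < Znorm x u a by rewrite lt_def Zp Z0.
pose a' i := a i * (Znorm x u a)^-1.
have ha' : supported_below a' N by move=> i /ha; rewrite /a' => ->; rewrite mul0r.
have Za' : Znorm x u a' <= 1.
  apply: Znorm_le => s hs; rewrite /a' Zterm_scale ?invr_ge0 //.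
  by rewrite mulrC ler_pdivrMr // mul1r (Zterm_le_Znorm x_normalized u_normalized ha hs).
have := pairing_le_Ynorm_ball hf ha' Za'.
have -> : pairing f a' N = pairing f a N * (Znorm x u a)^-1.
  by rewrite /pairing mulr_suml; apply: eq_bigr => i _; rewrite /a' mulrA.
by rewrite normrM (ger0_norm (ltW (_ : 0 < (Znorm x u a)^-1))) ?invr_gt0 // ler_pdivrMr.
Qed.

(* Each coordinate of f is bounded by its Y-norm (test against a unit vector). *)
Lemma coord_le_Ynorm f i : in_Y x u f -> `|f i| <= Ynorm x u f.
Proof.
move=> hf; pose e j : R := if j == i then 1 else 0.
have last_only (F : nat -> R) : \sum_(j < i) F j * e j = 0.
  by apply: big1 => j _; rewrite /e ifN ?mulr0 // neq_ltn ltn_ord.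
have he : supported_below e i.+1.
  by move=> j ij; rewrite /e ifN // neq_ltn orbC (leq_trans (ltnSn i) ij).
have Ze : Znorm x u e <= 1.
  apply: le_trans (Znorm_le_l1 x_normalized u_normalized he) _.
  rewrite big_ord_recr /= /e eqxx normr1 big1 ?add0r // => j _.
  by rewrite ifN ?normr0 // neq_ltn ltn_ord.
have := pairing_le_Ynorm_ball hf he Ze.
by rewrite /pairing big_ord_recr /= last_only add0r /e eqxx mulr1.
Qed.

End DualNorm.

Definition unit_functional {R : pzRingType} (k i : nat) : R := if i == k then 1 else 0.

Lemma unit_functional_comb (R : pzRingType) m (c : nat -> R) i :
  \sum_(k < m) c k * unit_functional k i = if (i < m)%N then c i else 0.
Proof.
case: ltnP => im.
  rewrite (bigD1 (Ordinal im)) //= /unit_functional eqxx mulr1 big1 ?addr0 // => k hk.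
  by case: eqP => [ik|]; [move: hk; rewrite -(inj_eq val_inj) /= ik eqxx|rewrite mulr0].
rewrite big1 // => k _; rewrite /unit_functional ifN ?mulr0 //.
by rewrite neq_ltn orbC (leq_trans (ltn_ord k) im).
Qed.

Section TailSubspaces.
Variable R : realType.
Variables X U : normedModType R.
Variable x : nat -> X.
Variable u : nat -> U.
Hypothesis x_normalized : forall n, `|x n| = 1.
Hypothesis u_normalized : normalized_seq u.

Definition tail_subspace (m : nat) : set (nat -> R) :=
  fun f => in_Y x u f /\ forall i, (i < m)%N -> f i = 0.

(* W_m is closed in Y, since coordinates are Y-continuous. *)
Lemma tail_subspace_closed m f : in_Y x u f ->
  (forall eps : R, 0 < eps -> exists g, tail_subspace m g /\
     Ynorm x u (fun i => f i - g i) <= eps) -> tail_subspace m f.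
Proof.
move=> hf hc; split => // i im; apply/eqP; rewrite -normr_le0.
apply/ler_addgt0Pr => eps eps0; rewrite add0r.
have [g [[hg zg] hn]] := hc eps eps0; apply: le_trans hn.
have := coord_le_Ynorm x_normalized u_normalized i (in_Y_sub x_normalized u_normalized hf hg).
by rewrite zg // subr0.
Qed.

Lemma tail_subspace_fincodim m f : in_Y x u f ->
  exists c : nat -> R, tail_subspace m (fun i => f i -
    \sum_(k < size (mkseq (@unit_functional R) m)) c k *
      nth (fun _ => 0) (mkseq (@unit_functional R) m) k i).
Proof.
move=> hf; exists f; rewrite size_mkseq.
have -> : (fun i => f i - \sum_(k < m) f k * nth (fun _ => 0) (mkseq (@unit_functional R) m) k i)
        = (fun i => f i - (if (i < m)%N then f i else 0)).
  apply: funext => i; rewrite -unit_functional_comb; congr (_ - _).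
  by apply: eq_bigr => k _; rewrite nth_mkseq.
split; last by move=> i ->; rewrite subrr.
apply: (in_Y_sub x_normalized u_normalized) => //.
apply: (in_Y_supported x_normalized u_normalized (M := m)).
by move=> i; rewrite leqNgt => /negbTE ->.
Qed.

Lemma tail_subspace_fincodim_subspace m :
  closed_fincodim_subspace x u (tail_subspace m).
Proof.
have Yadd := in_Y_add x_normalized u_normalized.
have Yscale := in_Y_scale x_normalized u_normalized.
split; first by move=> f [].
split; first by split => //; apply: (in_Y_supported x_normalized u_normalized (M := 0%N)).
split; first by move=> f g [hf zf] [hg zg]; split => [|i im]; [exact: Yadd|rewrite zf ?zg ?addr0].
split; first by move=> c f [hf zf]; split => [|i im]; [exact: Yscale|rewrite zf ?mulr0].
split; first exact: tail_subspace_closed.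
exists (mkseq (@unit_functional R) m); split; last exact: tail_subspace_fincodim.
move=> k; rewrite size_mkseq => km; rewrite nth_mkseq //.
apply: (in_Y_supported x_normalized u_normalized (M := k.+1)) => i ki.
by rewrite /unit_functional ifN // neq_ltn orbC (leq_trans (ltnSn k) ki).
Qed.

End TailSubspaces.

Section Restriction.
Variable R : realType.
Variables X U : normedModType R.
Variable x : nat -> X.
Variable u : nat -> U.
Hypothesis u_normalized : normalized_seq u.
Hypothesis u_uncond : one_unconditional u.

Definition interval_restrict (z : nat -> R) (m m' : nat) : nat -> R :=
  fun i => if (m <= i < m')%N then z i else 0.

Definition meets (m m' : nat) (p : nat * nat) : bool := (p.1 < m')%N && (m < p.2)%N.

Definition clip_interval (m m' : nat) (p : nat * nat) : nat * nat :=
  (maxn p.1 m, minn p.2 m').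

Definition clip (m m' : nat) (s : seq (nat * nat)) : seq (nat * nat) :=
  [seq clip_interval m m' p | p <- s & meets m m' p].

(* The coefficient of u_i in the vector whose norm is Zterm z s. *)
Definition start_coef (z : nat -> R) (s : seq (nat * nat)) (i : nat) : R :=
  \sum_(p <- s | p.1 == i) interval_norm x z p.

Lemma interval_restrict_supported (z : nat -> R) N m m' :
  supported_below z N -> supported_below (interval_restrict z m m') N.
Proof. by move=> zs i /zs; rewrite /interval_restrict => ->; case: ifP. Qed.

Lemma sum_by_start (c : nat * nat -> R) s L :
  (forall p, p \in s -> (L <= p.1)%N -> c p = 0) ->
  \sum_(p <- s) c p *: u p.1 = \sum_(i < L) (\sum_(p <- s | p.1 == i) c p) *: u i.
Proof.
move=> h.
have -> : \sum_(i < L) (\sum_(p <- s | p.1 == i) c p) *: u i =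
   \sum_(i < L) \sum_(p <- s) (if p.1 == i then c p *: u i else 0).
  apply: eq_bigr => i _; rewrite scaler_suml big_mkcond /=; apply: eq_bigr => p _.
  by case: ifP => //; rewrite scale0r.
rewrite exchange_big /= big_seq [RHS]big_seq; apply: eq_bigr => p ps.
case: (ltnP p.1 L) => pL.
  rewrite (bigD1 (Ordinal pL)) //= eqxx big1 ?addr0 // => i hi.
  by case: eqP => // e; move: hi; rewrite -(inj_eq val_inj) /= -e eqxx.
rewrite h // scale0r big1 // => i _; case: eqP => // e.
by move: (ltn_ord i); rewrite -e ltnNge pL.
Qed.

Lemma interval_norm_restrict z m m' p : (m < m')%N -> (p.1 < p.2)%N -> meets m m' p ->
  interval_norm x (interval_restrict z m m') p = interval_norm x z (clip_interval m m' p).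
Proof.
move=> mm vp /andP[h1 h2]; rewrite /interval_norm /=; congr `|_|.
rewrite (@big_cat_nat _ _ _ (maxn p.1 m)) ?leq_maxl //=; last by lia.
rewrite (@big_cat_nat _ _ _ (minn p.2 m') (maxn p.1 m)) //=; try lia.
rewrite big_nat_cond big1 ?add0r; last first.
  move=> i /andP[/andP[a b] _].
  by rewrite /interval_restrict (_ : (m <= i < m')%N = false) ?scale0r //; lia.
rewrite [X in _ + X]big_nat_cond [X in _ + X]big1 ?addr0; last first.
  move=> i /andP[/andP[a b] _].
  by rewrite /interval_restrict (_ : (m <= i < m')%N = false) ?scale0r //; lia.
rewrite big_nat_cond [RHS]big_nat_cond; apply: eq_bigr => i /andP[/andP[a b] _].
by rewrite /interval_restrict (_ : (m <= i < m')%N = true) //; lia.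
Qed.

Lemma interval_norm_restrict_out z m m' p : ~~ meets m m' p ->
  interval_norm x (interval_restrict z m m') p = 0.
Proof.
move=> hm; rewrite /interval_norm big_nat_cond big1 ?normr0 // => i /andP[/andP[a b] _].
rewrite /interval_restrict (_ : (m <= i < m')%N = false) ?scale0r //.
by move: hm; rewrite /meets negb_and -!leqNgt => /orP[]; lia.
Qed.

Lemma start_coefE z s i :
  start_coef z s i = \sum_(p <- s) (if p.1 == i then interval_norm x z p else 0).
Proof. by rewrite /start_coef big_mkcond. Qed.

Lemma start_coef_ge0 z s i : 0 <= start_coef z s i.
Proof. by apply: sumr_ge0 => p _; apply: interval_norm_ge0. Qed.

Lemma start_coef_clip z m m' s i : (m < m')%N -> all (fun p => (p.1 < p.2)%N) s ->
  start_coef z (clip m m' s) i =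
  \sum_(p <- s) (if meets m m' p && (maxn p.1 m == i)
                 then interval_norm x (interval_restrict z m m') p else 0).
Proof.
move=> mm vs; rewrite /start_coef /clip big_map big_filter_cond big_mkcond big_seq [RHS]big_seq.
apply: eq_bigr => p ps; case: ifP => // /andP[hm _].
by rewrite interval_norm_restrict //; move/allP: vs => /(_ p ps).
Qed.

Lemma start_coef_clip_out z m m' s i : (m < m')%N -> all (fun p => (p.1 < p.2)%N) s ->
  ~~ (m <= i < m')%N -> start_coef z (clip m m' s) i = 0.
Proof.
move=> mm vs hi; rewrite start_coef_clip // big1 // => p _.
case: ifP => // /andP[/andP[a b] /eqP c]; exfalso; move: hi; rewrite -c; lia.
Qed.

Lemma restrict_head_le z m m' L s : (m < m')%N -> (m <= L)%N ->
  all (fun p => (p.1 < p.2)%N) s ->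
  \sum_(i < L) (if (i < m)%N then start_coef (interval_restrict z m m') s i else 0)
    <= start_coef z (clip m m' s) m.
Proof.
move=> mm mL vs; set c := interval_norm x (interval_restrict z m m').
have -> : \sum_(i < L) (if (i < m)%N then start_coef (interval_restrict z m m') s i else 0) =
    \sum_(p <- s) \sum_(i < L) (if (p.1 < m)%N then c p else 0) * unit_functional i p.1.
  rewrite exchange_big /=; apply: eq_bigr => i _; rewrite start_coefE.
  case: ifP => im; last first.
    rewrite big1 // => p _; rewrite /unit_functional.
    by case: eqP => [->|_]; rewrite ?im ?mul0r ?mulr0.
  apply: eq_bigr => p _; rewrite /unit_functional.
  by case: eqP => [->|_]; rewrite ?im ?mulr1 ?mulr0.

rewrite start_coef_clip //; apply: ler_sum => p _.
rewrite (unit_functional_comb L (fun _ => if (p.1 < m)%N then c p else 0)) /=.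
case: (ltnP p.1 m) => pm; last by rewrite if_same; case: ifP => // _; apply: interval_norm_ge0.
rewrite (leq_trans pm mL) eqxx andbT.
by case: (boolP (meets m m' p)) => // hmt; rewrite /c interval_norm_restrict_out.
Qed.

Lemma restrict_tail_le z m m' s i : (m < m')%N -> all (fun p => (p.1 < p.2)%N) s ->
  (m <= i)%N ->
  start_coef (interval_restrict z m m') s i <= start_coef z (clip m m' s) i.
Proof.
move=> mm vs mi; rewrite start_coef_clip // start_coefE; apply: ler_sum => p _.
case: eqP => [pi|_]; last by case: ifP => // _; apply: interval_norm_ge0.
rewrite (_ : maxn p.1 m == i) ?andbT; last by apply/eqP; lia.
by case: (boolP (meets m m' p)) => // hmt; rewrite interval_norm_restrict_out.
Qed.

(* A Z-term of the restriction of z to [m, m') is controlled, up to a factor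
   two, by the clipped family for z itself: the head (intervals starting
   before m) collapses onto the coordinate m, the tail is dominated. *)
Lemma Zterm_restrict_le z m m' L s : (m < m')%N -> (m' <= L)%N ->
  all (fun p => (p.1 < p.2)%N) s ->
  Zterm x u (interval_restrict z m m') s
    <= 2 * `|\sum_(i < L) start_coef z (clip m m' s) i *: u i|.
Proof.
move=> mm mL vs.
set e := start_coef z (clip m m' s); set d := start_coef (interval_restrict z m m') s.
rewrite ZtermE (@sum_by_start _ _ L); last first.
  move=> p ps Lp; apply: interval_norm_restrict_out.
  by rewrite /meets negb_and -leqNgt (leq_trans mL Lp).
have -> : \sum_(i < L) d i *: u i =
   \sum_(i < L) (if (i < m)%N then d i else 0) *: u i +
   \sum_(i < L) (if (i < m)%N then 0 else d i) *: u i.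
  rewrite -big_split /=; apply: eq_bigr => i _; rewrite -scalerDl.
  by case: ifP; rewrite ?addr0 ?add0r.
apply: le_trans (ler_normD _ _) _; rewrite mulr2n mulrDl mul1r; apply: lerD.
  apply: le_trans (basis_norm_le_l1 u_normalized (fun i => if (i < m)%N then d i else 0) L) _.
  apply: le_trans (uncond_coef_le u_normalized u_uncond e (leq_trans mm mL)).
  rewrite ger0_norm ?start_coef_ge0 //.
  apply: le_trans (restrict_head_le z mm (ltnW (leq_trans mm mL)) vs).
  by apply: ler_sum => i _; case: ifP => _; rewrite ?normr0 // ger0_norm // start_coef_ge0.
apply: (uncond_dominated u_uncond (d := fun i => if (i < m)%N then 0 else d i)) => i iL.
case: ifP => im; first by rewrite normr0.
rewrite !ger0_norm ?start_coef_ge0 //; apply: restrict_tail_le => //.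
by rewrite leqNgt im.
Qed.

End Restriction.

Definition inside (a b : nat) (q : nat * nat) : bool :=
  [&& (a <= q.1)%N, (q.1 < q.2)%N & (q.2 <= b)%N].

Definition successive_within (a b : nat) (t : seq (nat * nat)) : bool :=
  all (inside a b) t && pairwise precedes t.

Lemma sorted_precedes_pairwise s : all (fun p => (p.1 < p.2)%N) s ->
  sorted precedes s -> pairwise precedes s.
Proof.
move=> vs ss; rewrite -(sorted_pairwise_in (P := fun p : nat * nat => (p.1 < p.2)%N)) //.
by move=> q p r; rewrite /precedes /= => hp hq hr; lia.
Qed.

Lemma clip_successive m m' s : (m < m')%N -> sorted precedes s ->
  all (fun p => (p.1 < p.2)%N) s -> successive_within m m' (clip m m' s).
Proof.
move=> mm ss vs; apply/andP; split.
  apply/allP => q /mapP [p]; rewrite mem_filter => /andP[hm ps] ->.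
  move/allP: vs => /(_ p ps); move: hm; rewrite /meets /inside /clip_interval /= => /andP[a b] c.
  by apply/and3P; split; lia.
rewrite /clip pairwise_map; apply: pairwise_filter.
apply: (sub_pairwise _ (sorted_precedes_pairwise vs ss)) => p q.
by rewrite /precedes /clip_interval /= => h; lia.
Qed.

Lemma successive_cat a b c t1 t2 : (a <= b)%N -> (b <= c)%N ->
  successive_within a b t1 -> successive_within b c t2 ->
  successive_within a c (t1 ++ t2).
Proof.
move=> ab bc /andP[a1 p1] /andP[a2 p2]; apply/andP; split.
  rewrite all_cat; apply/andP; split.
    by apply/allP => q /(allP a1); rewrite /inside => /and3P[h1 h2 h3]; apply/and3P; split; lia.
  by apply/allP => q /(allP a2); rewrite /inside => /and3P[h1 h2 h3]; apply/and3P; split; lia.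
rewrite pairwise_cat; apply/and3P; split => //; apply/allrelP => q q' /(allP a1) + /(allP a2).
by rewrite /inside /precedes => /and3P[h1 h2 h3] /and3P[h4 h5 h6]; lia.
Qed.

Lemma chain_mono n (ms : nat -> nat) : (forall j, (j < n)%N -> (ms j < ms j.+1)%N) ->
  forall i j, (i <= j)%N -> (j <= n)%N -> (ms i <= ms j)%N.
Proof.
move=> h i; elim=> [|j IH] ij jn; first by move: ij; rewrite leqn0 => /eqP ->.
move: ij; rewrite leq_eqVlt => /orP[/eqP -> //|ij].
exact: leq_trans (IH ij (ltnW jn)) (ltnW (h j jn)).
Qed.

Lemma successive_flatten n (ms : nat -> nat) (T : nat -> seq (nat * nat)) :
  (forall j, (j < n)%N -> (ms j < ms j.+1)%N) ->
  (forall j, (j < n)%N -> successive_within (ms j) (ms j.+1) (T j)) ->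
  successive_within (ms 0%N) (ms n) (flatten [seq T j | j <- iota 0 n]).
Proof.
elim: n => [|n IH] hm hg //.
rewrite -addn1 iotaD map_cat flatten_cat /= cats0 addn1.
apply: successive_cat.
- exact: (chain_mono hm (leq0n n) (leqnSn n)).
- exact: ltnW (hm n (ltnSn n)).
- by apply: IH => j jn; [apply: hm|apply: hg]; apply: ltnW.
- exact: hg.
Qed.

Section SuccessiveFamilies.
Variable R : realType.
Variables X U : normedModType R.
Variable x : nat -> X.
Variable u : nat -> U.
Hypothesis x_normalized : forall n, `|x n| = 1.
Hypothesis u_normalized : normalized_seq u.
Hypothesis u_uncond : one_unconditional u.

(* A (possibly empty) family of successive intervals gives a lower bound for
   the Z-norm: pad it with an interval beyond the support of z. *)
Lemma successive_le_Znorm z N a b t : supported_below z N -> (a <= b)%N ->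
  successive_within a b t ->
  `|\sum_(q <- t) interval_norm x z q *: u q.1| <= Znorm x u z.
Proof.
move=> zs ab ht; set L := maxn N b.
have pad : successive_within a L.+1 (t ++ [:: (L, L.+1)]).
  apply: successive_cat ht _ => //; first by rewrite (leq_trans (leq_maxr N b)).
  by rewrite /successive_within /inside /= !andbT; apply/and3P; split; lia.
have hs : interval_list (t ++ [:: (L, L.+1)]).
  move: pad => /andP[ga gp]; split; first by rewrite size_cat addn1.
  split; last exact: pairwise_sorted.
  by apply/allP => q /(allP ga) /and3P[].
apply: le_trans (Zterm_le_Znorm x_normalized u_normalized zs hs).
rewrite ZtermE big_cat /= big_cons big_nil.
have -> : interval_norm x z (L, L.+1) = 0.
  by rewrite /interval_norm /= big_nat1 zs ?scale0r ?normr0 // leq_maxl.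
by rewrite scale0r !addr0.
Qed.

Lemma blocks_le_Znorm z N n (ms : nat -> nat) (T : nat -> seq (nat * nat)) :
  supported_below z N ->
  (forall j, (j < n)%N -> (ms j < ms j.+1)%N) ->
  (forall j, (j < n)%N -> successive_within (ms j) (ms j.+1) (T j)) ->
  `|\sum_(j < n) \sum_(q <- T j) interval_norm x z q *: u q.1| <= Znorm x u z.
Proof.
move=> zs hm hg.
have := successive_le_Znorm zs (chain_mono hm (leq0n n) (leqnn n)) (successive_flatten hm hg).
by rewrite big_flatten big_map (_ : iota 0 n = index_iota 0 n) ?big_mkord // /index_iota subn0.
Qed.

Lemma Znorm_restrict_le z N m m' : supported_below z N -> (m < m')%N ->
  Znorm x u (interval_restrict z m m') <= 2 * Znorm x u z.
Proof.
move=> zs mm; apply: Znorm_le => s [_ [vs ss]].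
apply: le_trans (Zterm_restrict_le x u_normalized u_uncond z mm (leqnn m') vs) _.
rewrite ler_pM2l // -(@sum_by_start _ _ u (interval_norm x z) _ m'); last first.
  move=> q /mapP[p]; rewrite mem_filter => /andP[hm ps] -> /=.
  by move: hm; rewrite /meets => /andP[a b] c; lia.
exact: successive_le_Znorm zs (ltnW mm) (clip_successive mm ss vs).
Qed.

Lemma clipped_blocks_le_Znorm z N n (ms : nat -> nat) (ss : nat -> seq (nat * nat)) :
  supported_below z N -> (forall j, (j < n)%N -> (ms j < ms j.+1)%N) ->
  (forall j, (j < n)%N -> sorted precedes (ss j) /\ all (fun p => (p.1 < p.2)%N) (ss j)) ->
  `|\sum_(j < n) \sum_(i < ms n) start_coef x z (clip (ms j) (ms j.+1) (ss j)) i *: u i|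
    <= Znorm x u z.
Proof.
move=> zs hm hss.
rewrite (eq_bigr (fun j : 'I_n => \sum_(q <- clip (ms j) (ms j.+1) (ss j))
                                     interval_norm x z q *: u q.1)); last first.
  move=> j _; rewrite (@sum_by_start _ _ u (interval_norm x z) _ (ms n)) //.
  move=> q /mapP[p]; rewrite mem_filter => /andP[hmt ps] -> /=.
  have := hm j (ltn_ord j); have := chain_mono hm (ltn_ord j) (leqnn n).
  by move: hmt; rewrite /meets => /andP[a b] c; lia.
apply: (blocks_le_Znorm (T := fun j => clip (ms j) (ms j.+1) (ss j)) zs hm) => j jn.
by have [ss0 vs] := hss j jn; exact: clip_successive (hm j jn) ss0 vs.
Qed.

End SuccessiveFamilies.

Lemma chain_block_coeffs (R : realType) n (ms : nat -> nat) (b : nat -> nat -> R) :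
  (forall j, (j < n)%N -> (ms j < ms j.+1)%N) ->
  (forall j i, b j i != 0 -> (j < n)%N && (ms j <= i < ms j.+1)%N) ->
  (forall j, (j < n)%N -> exists i, b j i != 0) ->
  block_coeffs n (ms n) b.
Proof.
move=> hm hsupp hnz.
have below j i : b j i != 0 -> (i < ms n)%N.
  move=> /hsupp /andP[jn /andP[_ hi]].
  exact: leq_trans hi (chain_mono hm jn (leqnn n)).
split; first by move=> j /hnz [i hi]; exists i; split; first exact: below hi.
split; first by move=> j i ni; apply/eqP/negP => /negP /below; rewrite ltnNge ni.
move=> j1 j2 i1 i2 j12 j2n /hsupp /andP[_ /andP[_ a]] /hsupp /andP[_ /andP[c _]].
exact: leq_trans a (leq_trans (chain_mono hm j12 (ltnW j2n)) c).
Qed.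

Lemma le_of_forall_le_addM (R : realFieldType) (A B K : R) : 0 <= K ->
  (forall d, 0 < d -> A <= B + K * d) -> A <= B.
Proof.
move=> K0 h; apply/ler_addgt0Pr => e e0.
have K1 : 0 < K + 1 by lra.
apply: le_trans (h (e / (K + 1)) (divr_gt0 e0 K1)) _; rewrite lerD2l.
by rewrite mulrA ler_pdivrMr //; nra.
Qed.

Section TsirelsonEstimates.
Variable R : realType.
Variables X U : normedModType R.
Variable x : nat -> X.
Variable u : nat -> U.
Hypothesis x_normalized : forall n, `|x n| = 1.
Hypothesis u_normalized : normalized_seq u.
Hypothesis u_uncond : one_unconditional u.
Variable C : R.
Hypothesis C_gt0 : 0 < C.
Hypothesis tsirelson : forall (n N : nat) (b : nat -> nat -> R),
  block_coeffs n N b ->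
  (forall j, (j < n)%N -> `|block_vec u N b j| = 1) ->
  (forall i, b 0%N i != 0 -> (n <= i.+1)%N) ->
  equiv_l1 C n (block_vec u N b).

(* The lower l_1 estimate for nonzero blocks w_0 < ... < w_(n-1) with
   n <= min supp w_0, obtained by normalizing them. *)
Lemma tsirelson_lower n (ms : nat -> nat) (e : nat -> nat -> R) :
  (n <= ms 0%N)%N -> (forall j, (j < n)%N -> (ms j < ms j.+1)%N) ->
  (forall j i, (j < n)%N -> ~~ (ms j <= i < ms j.+1)%N -> e j i = 0) ->
  (forall j, (j < n)%N -> 0 < `|\sum_(i < ms n) e j i *: u i|) ->
  \sum_(j < n) `|\sum_(i < ms n) e j i *: u i|
    <= C * `|\sum_(j < n) \sum_(i < ms n) e j i *: u i|.
Proof.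
move=> n0 hm eout wpos.
set w := fun j => \sum_(i < ms n) e j i *: u i.
pose b j i := if (j < n)%N then e j i / `|w j| else 0.
have bv j : (j < n)%N -> block_vec u (ms n) b j = (`|w j|)^-1 *: w j.
  move=> jn; rewrite /block_vec scaler_sumr; apply: eq_bigr => i _.
  by rewrite /b jn scalerA mulrC.
have hsupp j i : b j i != 0 -> (j < n)%N && (ms j <= i < ms j.+1)%N.
  rewrite /b; case: ifP => jn; last by rewrite eqxx.
  by apply: contraNT => hout; rewrite eout ?mul0r.
have hnz j : (j < n)%N -> exists i, b j i != 0.
  move=> jn; apply/not_existsP => hz; move: (wpos j jn); rewrite /w.
  rewrite big1 ?normr0 ?ltxx // => i _.
  move/negP/negPn/eqP: (hz i); rewrite /b jn => /eqP.
  by rewrite mulf_eq0 invr_eq0 (gt_eqF (wpos j jn)) orbF => /eqP ->; rewrite scale0r.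
have bc := chain_block_coeffs hm hsupp hnz.
have bn j : (j < n)%N -> `|block_vec u (ms n) b j| = 1.
  move=> jn; rewrite bv // normrZ normrV ?unitfE ?gt_eqF ?wpos // normr_id.
  by rewrite mulVf // gt_eqF ?wpos.
have b0 i : b 0%N i != 0 -> (n <= i.+1)%N.
  move/hsupp => /andP[_ /andP[hi _]]; exact: leq_trans n0 (leq_trans hi (leqnSn i)).
have [low _] := tsirelson bc bn b0 (fun j => `|w j|).
have recombine : \sum_(j < n) `|w j| *: block_vec u (ms n) b j = \sum_(j < n) w j.
  by apply: eq_bigr => j _; rewrite bv // scalerA mulfV ?scale1r // gt_eqF ?wpos.
rewrite recombine in low.
rewrite -ler_pdivrMl // mulrC; apply: le_trans low.
by rewrite mulrC; under [X in _ <= _ * X]eq_bigr => j _ do rewrite normr_id.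
Qed.

(* For nonnegative blocks, possibly zero, perturb each block by d u_(m_j)
   so that it becomes nonzero; this costs n d on the right-hand side. *)
Lemma tsirelson_lower_nonneg n (ms : nat -> nat) (e : nat -> nat -> R) d :
  0 < d -> (n <= ms 0%N)%N -> (forall j, (j < n)%N -> (ms j < ms j.+1)%N) ->
  (forall j i, 0 <= e j i) ->
  (forall j i, (j < n)%N -> ~~ (ms j <= i < ms j.+1)%N -> e j i = 0) ->
  \sum_(j < n) `|\sum_(i < ms n) e j i *: u i| <=
    C * (`|\sum_(j < n) \sum_(i < ms n) e j i *: u i| + n%:R * d).
Proof.
move=> d0 n0 hm e0 eout; set M := ms n.
have msM j : (j < n)%N -> (ms j < M)%N.
  by move=> jn; apply: leq_trans (hm j jn) (chain_mono hm jn (leqnn n)).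
pose e' j i := e j i + (if i == ms j then d else 0).
have e'0 j i : 0 <= e' j i by rewrite addr_ge0 //; case: ifP => // _; apply: ltW.
have perturbed j : (j < n)%N ->
    \sum_(i < M) e' j i *: u i = \sum_(i < M) e j i *: u i + d *: u (ms j).
  move=> jn; under eq_bigr => i _ do rewrite scalerDl; rewrite big_split /=; congr (_ + _).
  rewrite (bigD1 (Ordinal (msM j jn))) //= eqxx big1 ?addr0 // => i ne.
  by case: eqP => [ij|]; [move: ne; rewrite -(inj_eq val_inj) /= ij eqxx|rewrite scale0r].
have e'out j i : (j < n)%N -> ~~ (ms j <= i < ms j.+1)%N -> e' j i = 0.
  move=> jn hout; rewrite /e' eout // add0r ifN //.
  by apply: contraNneq hout => ->; rewrite leqnn hm.
have w'_ge j : (j < n)%N -> d <= `|\sum_(i < M) e' j i *: u i|.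
  move=> jn; apply: le_trans (uncond_coef_le u_normalized u_uncond (e' j) (msM j jn)).
  by rewrite ger0_norm // /e' eqxx lerDr.
have w_le j : (j < n)%N ->
    `|\sum_(i < M) e j i *: u i| <= `|\sum_(i < M) e' j i *: u i|.
  move=> jn; apply: (uncond_dominated u_uncond) => i _.
  by rewrite !ger0_norm // lerDl; case: ifP => // _; apply: ltW.
have sum_le : `|\sum_(j < n) \sum_(i < M) e' j i *: u i| <=
    `|\sum_(j < n) \sum_(i < M) e j i *: u i| + n%:R * d.
  rewrite (eq_bigr _ (fun (j : 'I_n) _ => perturbed j (ltn_ord j))) big_split /=.
  apply: le_trans (ler_normD _ _) _; rewrite lerD2l.
  apply: le_trans (ler_norm_sum _ _ _) _.
  under eq_bigr => j _ do rewrite normrZ u_normalized mulr1 (ger0_norm (ltW d0)).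
  by rewrite sumr_const card_ord mulr_natl.
apply: le_trans (_ : \sum_(j < n) `|\sum_(i < M) e' j i *: u i| <= _).
  by apply: ler_sum => j _; apply: w_le.
apply: le_trans (tsirelson_lower n0 hm e'out _) _.
  by move=> j jn; apply: lt_le_trans d0 (w'_ge j jn).
by rewrite ler_pM2l.
Qed.

Lemma sum_block_restrictions_le n (ms : nat -> nat) z N :
  (n <= ms 0%N)%N -> (forall j, (j < n)%N -> (ms j < ms j.+1)%N) ->
  supported_below z N ->
  \sum_(j < n) Znorm x u (interval_restrict z (ms j) (ms j.+1)) <= 2 * C * Znorm x u z.
Proof.
move=> n0 hm zs; apply: (@le_of_forall_le_addM _ _ _ (2 * C * n%:R + n%:R)).
  by rewrite addr_ge0 // !mulr_ge0 // ltW.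
move=> d d0.
have /choice [ss hss] : forall j, exists s, (j < n)%N -> interval_list s /\
    Znorm x u (interval_restrict z (ms j) (ms j.+1)) - d
      < Zterm x u (interval_restrict z (ms j) (ms j.+1)) s.
  move=> j; have [s hs] := Znorm_approx x_normalized u_normalized
    (interval_restrict_supported (ms j) (ms j.+1) zs) d0.
  by exists s.
have vs j : (j < n)%N -> all (fun p : nat * nat => (p.1 < p.2)%N) (ss j).
  by move=> jn; have [[_ []]] := hss j jn.
pose e j := start_coef x z (clip (ms j) (ms j.+1) (ss j)).
set M := ms n.
have near_norming : \sum_(j < n) Znorm x u (interval_restrict z (ms j) (ms j.+1)) <=
    \sum_(j < n) (2 * `|\sum_(i < M) e j i *: u i| + d).
  apply: ler_sum => j _; have [_ hl] := hss j (ltn_ord j).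
  rewrite -lerBlDr; apply: le_trans (ltW hl) _.
  have near := Zterm_restrict_le x u_normalized u_uncond z (hm j (ltn_ord j))
    (chain_mono hm (ltn_ord j) (leqnn n)) (vs j (ltn_ord j)).
  exact: near.
have lower : \sum_(j < n) `|\sum_(i < M) e j i *: u i|
    <= C * (`|\sum_(j < n) \sum_(i < M) e j i *: u i| + n%:R * d).
  have estimate := tsirelson_lower_nonneg d0 n0 hm
    (fun j i => start_coef_ge0 x z _ i)
    (fun j i jn hout => start_coef_clip_out x z (hm j jn) (vs j jn) hout).
  exact: estimate.
have upper : `|\sum_(j < n) \sum_(i < M) e j i *: u i| <= Znorm x u z.
  apply: (clipped_blocks_le_Znorm x_normalized u_normalized zs hm) => j jn.
  by have [[_ [? ?]] _] := hss j jn.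
apply: le_trans near_norming _.
rewrite big_split /= sumr_const card_ord -mulr_sumr -[d *+ n]mulr_natr.
move: lower upper.
move: (\sum_(j < n) `|\sum_(i < M) e j i *: u i|) => S.
move: (`|\sum_(j < n) \sum_(i < M) e j i *: u i|) => T.
move: (Znorm x u z) => Z lower upper.
have := ler_wpM2l (ltW C_gt0) upper; lra.
Qed.

Lemma pairing_block_le (y g z : nat -> R) m m' N eps :
  (m < m')%N -> in_Y x u y -> Ynorm x u y = 1 -> (forall i, (i < m)%N -> y i = 0) ->
  supported_below g m' ->
  (forall a N, supported_below a N ->
     `|pairing (fun i => y i - g i) a N| <= eps * Znorm x u a) ->
  0 <= eps -> supported_below z N ->
  `|pairing y z N| <= Znorm x u (interval_restrict z m m') + 3 * eps * Znorm x u z.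
Proof.
move=> mm hy y1 y0 gs app e0 zs.
have split_g : pairing y z N = pairing g z N + pairing (fun i => y i - g i) z N.
  by rewrite /pairing -big_split; apply: eq_bigr => i _ /=; ring.
have g_below : pairing g z N = pairing g (interval_restrict z 0 m') N.
  apply: pairing_ext => i; rewrite /interval_restrict /=.
  by case: (ltnP i m') => im //; rewrite gs // !mul0r.
have back_to_y : pairing g (interval_restrict z 0 m') N =
   pairing y (interval_restrict z 0 m') N -
   pairing (fun i => y i - g i) (interval_restrict z 0 m') N.
  by rewrite /pairing -sumrB; apply: eq_bigr => i _ /=; ring.
have y_above : pairing y (interval_restrict z 0 m') N = pairing y (interval_restrict z m m') N.
  apply: pairing_ext => i; rewrite /interval_restrict /=.
  by case: (ltnP i m) => im //; rewrite y0 // !mul0r.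
rewrite split_g g_below back_to_y y_above.
have main_term : `|pairing y (interval_restrict z m m') N| <= Znorm x u (interval_restrict z m m').
  have := pairing_le_Ynorm x_normalized u_normalized hy (interval_restrict_supported m m' zs).
  by rewrite y1 mul1r.
have error_z := app z N zs.
have error_head : `|pairing (fun i => y i - g i) (interval_restrict z 0 m') N|
    <= eps * (2 * Znorm x u z).
  apply: le_trans (app _ N (interval_restrict_supported 0 m' zs)) _; rewrite ler_wpM2l //.
  exact: (Znorm_restrict_le x_normalized u_normalized u_uncond zs (leq_ltn_trans (leq0n m) mm)).
have Z0 := Znorm_ge0 x_normalized u_normalized zs.
apply: le_trans (ler_normD _ _) _; apply: le_trans (lerD (ler_normB _ _) (lexx _)) _.
lra.
Qed.

(* A position of the game after the functionals ys have been chosen: the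
   chain ms starts at m_0 >= n, the j-th chosen functional is a norm-one
   element of W_(m_j), and it is eps-approximated by gs j, supported below
   m_(j+1). *)
Definition position n (eps : R) (ys : seq (nat -> R)) (ms : nat -> nat)
    (gs : nat -> nat -> R) : Prop :=
  (n <= ms 0%N)%N /\ (forall j, (j < size ys)%N -> (ms j < ms j.+1)%N) /\
  forall j, (j < size ys)%N ->
    [/\ in_Y x u (nth (fun _ => 0) ys j), Ynorm x u (nth (fun _ => 0) ys j) = 1,
        (forall i, (i < ms j)%N -> nth (fun _ => 0) ys j i = 0),
        supported_below (gs j) (ms j.+1) &
        (forall a N, supported_below a N ->
           `|pairing (fun i => nth (fun _ => 0) ys j i - gs j i) a N| <= eps * Znorm x u a)].

Lemma position_c0_estimate (ys : seq (nat -> R)) ms gs (a : nat -> R) :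
  position (size ys) (size ys).+1%:R^-1 ys ms gs ->
  Ynorm x u (fun i => \sum_(m < size ys) a m * (nth (fun _ => 0) ys m) i)
    <= (2 * C + 3) * \big[Num.max/0]_(m < size ys) `|a m|.
Proof.
set n := size ys; set eps : R := n.+1%:R^-1; move=> [n0 [hm hy]].
set mx := \big[Num.max/0]_(m < n) `|a m|.
have mx0 : 0 <= mx by rewrite /mx; elim/big_ind: _ => // p q hp hq; rewrite le_max hp.
have amx (m : 'I_n) : `|a m| <= mx by apply: le_bigmax.
have e0 : 0 <= eps by rewrite /eps invr_ge0.
have neps : n%:R * eps <= 1 by rewrite /eps ler_pdivrMr ?ltr0Sn // mul1r ler_nat.
apply: (Ynorm_le x_normalized u_normalized) => z N zs Z1.
set p := fun m : nat => pairing (nth (fun _ => 0) ys m) z N.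
have -> : pairing (fun i => \sum_(m < n) a m * nth (fun _ => 0) ys m i) z N =
    \sum_(m < n) a m * p m.
  rewrite /pairing /p; under eq_bigr => i _ do rewrite mulr_suml.
  rewrite exchange_big /=; apply: eq_bigr => m _; rewrite mulr_sumr.
  by apply: eq_bigr => i _; rewrite mulrA.
apply: le_trans (ler_norm_sum _ _ _) _.
apply: le_trans (_ : \sum_(m < n) mx * `|p m| <= _).
  by apply: ler_sum => m _; rewrite normrM ler_wpM2r.
rewrite -mulr_sumr mulrC ler_wpM2r //.
have Z0 := Znorm_ge0 x_normalized u_normalized zs.
have pj (m : 'I_n) : `|p m| <=
    Znorm x u (interval_restrict z (ms m) (ms m.+1)) + 3 * eps * Znorm x u z.
  have [h1 h2 h3 h4 h5] := hy m (ltn_ord m).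
  exact: pairing_block_le (hm m (ltn_ord m)) h1 h2 h3 h4 h5 e0 zs.
apply: le_trans (ler_sum _ (fun m _ => pj m)) _.
rewrite big_split /= sumr_const card_ord.
have blocks := sum_block_restrictions_le n0 hm zs.
have h1 : C * Znorm x u z <= C by rewrite ler_piMr // ltW.
have h2 : n%:R * eps * Znorm x u z <= 1.
  by rewrite -[X in _ <= X]mul1r; apply: ler_pM => //; apply: mulr_ge0.
rewrite -mulr_natr; nra.
Qed.

(* The winning strategy: answer each position with the tail subspace beyond
   the current chain, then extend the chain past an approximant of the
   chosen functional. *)
Lemma position_wins n k : forall ys ms gs, (size ys + k = n)%N ->
  position n (n.+1%:R^-1) ys ms gs -> asymp_c0_game x u (2 * C + 3) k ys.
Proof.
elim: k => [|k IH] ys ms gs hs hI.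
  by move: hs; rewrite addn0 => hs; subst n => /= a; apply: position_c0_estimate hI.
have eps0 : 0 < (n.+1%:R : R)^-1 by rewrite invr_gt0 ltr0Sn.
set j0 := size ys.
exists (tail_subspace x u (ms j0)).
split; first exact: tail_subspace_fincodim_subspace x_normalized u_normalized (ms j0).
move=> y [hyY hy0] y1.
have [g [M [gsM app]]] := hyY _ eps0.
pose ms' j := if j == j0.+1 then maxn M (ms j0).+1 else ms j.
pose gs' j := if j == j0 then g else gs j.
apply: (IH (rcons ys y) ms' gs'); first by rewrite size_rcons addSnnS.
move: hI => [n0 [hm hy]].
have ms'E j : (j <= j0)%N -> ms' j = ms j.
  by move=> jj; rewrite /ms' ifN // neq_ltn ltnS jj.
split; first by rewrite ms'E.
split.
  move=> j; rewrite size_rcons ltnS leq_eqVlt => /orP[/eqP ->|jj].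
    by rewrite ms'E // /ms' eqxx; apply: leq_trans (leq_maxr _ _).
  by rewrite !ms'E ?(ltnW jj) //; apply: hm.
move=> j; rewrite size_rcons ltnS leq_eqVlt nth_rcons => /orP[/eqP ->|jj].
  rewrite ltnn eqxx ms'E // /ms' eqxx /gs' eqxx; split => //.
  by move=> i /(leq_trans (leq_maxl _ _)) /gsM.
by rewrite jj ms'E ?(ltnW jj) // ms'E ?jj // /gs' (ltn_eqF jj); apply: hy.
Qed.

End TsirelsonEstimates.

Theorem propositionA7 (R : realType)
  (X : completeNormedModType R) (x : nat -> X)
  (U : completeNormedModType R) (u : nat -> U) :
  separable X ->
  pm_dense_in_sphere x ->
  schauder_basis u -> normalized_seq u -> one_unconditional u ->
  boundedly_complete u ->
  tsirelson_property u ->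
  Y_asymptotic_c0 x u.
Proof.
move=> _ [x_normalized _] _ u_normalized u_uncond _ [C [C_gt0 tsirelson]].
exists (2 * C + 3); split; first by lra.
move=> k.
exact: (position_wins x_normalized u_normalized u_uncond C_gt0 tsirelson
  (n := k) (ms := fun _ => k) (gs := fun _ _ => 0)).
Qed.
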